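(* For every $\theta\in\mathbb{R}^p$ and every $i\in\{1,\dots,p\}$, define $\Psi:\mathbb{R}^p\to\mathbb{R}$ by $\Psi(\omega)=\sum_{\mathrm p\in\mathrm P}\prod_{k\in\mathrm p}\omega_k$ (so that $\Psi(\theta\odot\theta)=\|\Phi(\theta)\|_2^2$). Then $$G_{ii}=\frac{\partial\Psi}{\partial\omega_i}(\theta\odot\theta),$$ i.e. $\mathrm{diag}(G)=\nabla_{\theta^2}\|\Phi(\theta)\|_2^2$, the gradient of $\|\Phi(\theta)\|_2^2$ with respect to the vector of squared parameters $\theta^2=\theta\odot\theta$.
   Context: $\mathcal G=(V,E)$ is a finite DAG; input neurons have no incoming edges, output neurons no outgoing edges. $\theta\in\mathbb{R}^p$ consists of one weight $\theta_{u\to v}$ per edge and one bias $b_v$ per non-input neuron $v$. A path $\mathrm p=v_0\to\cdots\to v_d$ ($d\ge0$) follows edges and ends at an output neuron (for $d=0$, $v_0$ is non-input); $\mathrm P$ is the set of paths, $q=|\mathrm P|$. For a path $\mathrm p$, write $k\in\mathrm p$ for the parameter indices of its edges together with the index of $b_{v_0}$ when $v_0$ is not an input neuron. The path-lifting $\Phi:\mathbb{R}^p\to\mathbb{R}^q$ is $\Phi_{\mathrm p}(\theta)=\prod_{k\in\mathrm p}\theta_k$. $G=\partial\Phi(\theta)^\top\partial\Phi(\theta)\in\mathbb{R}^{p\times p}$ with $\partial\Phi(\theta)$ the Jacobian of $\Phi$; $\odot$ is the entrywise product. *)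

From HB Require Import structures.
From mathcomp Require Import all_boot all_order all_algebra.
From mathcomp Require Import all_classical all_reals all_analysis.
Set Implicit Arguments. Unset Strict Implicit. Unset Printing Implicit Defensive.
Import Order.TTheory GRing.Theory Num.Theory.
Local Open Scope ring_scope.

Section DAG.
Variables (V : finType) (E : rel V).

Definition acyclic : Prop := forall (x : V) (s : seq V), path E x s -> uniq (x :: s).

Definition is_input (v : V) : bool := [forall u, ~~ E u v].
Definition is_output (v : V) : bool := [forall w, ~~ E v w].

(* Parameter indices: one weight per edge, one bias per non-input neuron. *)
Definition param : finType :=
  ({e : V * V | E e.1 e.2} + {v : V | ~~ is_input v})%type.

(* A path v_0 -> ... -> v_d (as the list [v_0; ...; v_d]) following edges,
   ending at an output neuron; for d = 0, v_0 must be non-input. *)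
Definition is_npath (s : seq V) : bool :=
  match s with
  | [::] => false
  | v0 :: r => [&& path E v0 r, is_output (last v0 r) & (r != [::]) || ~~ is_input v0]
  end.

(* k \in p: the edges of p, together with the bias of v_0 when v_0 is non-input. *)
Definition in_path (s : seq V) (k : param) : bool :=
  match k with
  | inl e => val e \in zip s (behead s)
  | inr v => ohead s == Some (val v)
  end.

(* Sum over the set P of all paths. In a DAG a path with d edges has d+1
   distinct vertices, so d < #|V|; each path is counted exactly once. *)
Definition sum_paths (R : nmodType) (F : seq V -> R) : R :=
  \sum_(d < #|V|) \sum_(t : (d.+1).-tuple V | is_npath t) F (val t).

Variable R : realType.

Definition Phi (s : seq V) (theta : {ffun param -> R}) : R :=
  \prod_(k | in_path s k) theta k.

Definition Psi (omega : {ffun param -> R}) : R := sum_paths (fun s => Phi s omega).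

Definition upd (theta : {ffun param -> R}) (i : param) (x : R) : {ffun param -> R} :=
  [ffun k => if k == i then x else theta k].

Definition partial (f : {ffun param -> R} -> R) (i : param) (theta : {ffun param -> R}) : R :=
  derive1 (fun x => f (upd theta i x)) (theta i).

Definition hadamard (a b : {ffun param -> R}) : {ffun param -> R} :=
  [ffun k => a k * b k].

(* G = (dPhi(theta))^T dPhi(theta): G_ij = sum_p dPhi_p/dtheta_i * dPhi_p/dtheta_j. *)
Definition Gmat (theta : {ffun param -> R}) (i j : param) : R :=
  sum_paths (fun s => partial (Phi s) i theta * partial (Phi s) j theta).

End DAG.

From HB Require Import structures.
From mathcomp Require Import all_boot all_order all_algebra.
From mathcomp Require Import all_classical all_reals all_analysis.
Local Open Scope ring_scope.
Import Order.TTheory GRing.Theory Num.Theory.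

(* Every parameter occurs at most once in a path monomial Phi_p, so Phi_p is
   affine in theta_i with slope [i \in p] * prod_{k \in p, k <> i} theta_k.
   Hence G_ii, the sum over paths of the squared slopes, is the sum over the
   paths through i of prod_{k \in p, k <> i} theta_k^2; this is the slope of
   the multi-affine polynomial Psi in omega_i at omega = theta * theta. *)

Lemma derive1_affine (R : realType) (a b x : R) :
  derive1 (fun y => a * y + b) x = a.
Proof. by rewrite derive1E derive_val addr0; exact: mulr1. Qed.

Lemma sum_paths_affine (V : finType) (E : rel V) (S : pzSemiRingType)
    (a b : seq V -> S) (x : S) :
  sum_paths E (fun s => a s * x + b s) = sum_paths E a * x + sum_paths E b.
Proof.
rewrite /sum_paths mulr_suml -big_split; apply: eq_bigr => d _.
by rewrite mulr_suml -big_split.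
Qed.

Section PathPartials.
Variables (V : finType) (E : rel V) (R : realType).
Implicit Types (s : seq V) (i : param E) (theta : {ffun param E -> R}).

Lemma partial_affine (f : {ffun param E -> R} -> R) i theta (a b : R) :
  (forall x, f (upd theta i x) = a * x + b) -> partial f i theta = a.
Proof. by move=> fE; rewrite /partial (boolp.funext fE) derive1_affine. Qed.

Definition dPhi s i theta : R :=
  if in_path s i then \prod_(k | in_path s k && (k != i)) theta k else 0.

Lemma Phi_upd s i theta x :
  Phi s (upd theta i x) = dPhi s i theta * x + (if in_path s i then 0 else Phi s theta).
Proof.
rewrite /Phi /dPhi; case: ifP => s_i.
  rewrite (bigD1 i) //= ffunE eqxx addr0 mulrC; congr (_ * _).
  by apply: eq_bigr => k /andP[_ /negPf k_i]; rewrite ffunE k_i.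
rewrite mul0r add0r; apply: eq_bigr => k s_k; rewrite ffunE.
by case: eqP => // k_i; rewrite k_i s_i in s_k.
Qed.

Lemma partial_Phi s i theta : partial (Phi s) i theta = dPhi s i theta.
Proof. exact/partial_affine/Phi_upd. Qed.

Lemma partial_Psi i theta :
  partial (@Psi V E R) i theta = sum_paths E (fun s => dPhi s i theta).
Proof.
apply: partial_affine => x; rewrite /Psi.
have -> : (fun s => Phi s (upd theta i x)) =
    fun s => dPhi s i theta * x + (if in_path s i then 0 else Phi s theta).
  by apply: boolp.funext => s; exact: Phi_upd.
exact: sum_paths_affine.
Qed.

Lemma dPhi_hadamard s i theta : dPhi s i (hadamard theta theta) = dPhi s i theta ^+ 2.
Proof.
rewrite /dPhi; case: ifP => _; last by rewrite expr2 mulr0.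
by rewrite -prodrXl; apply: eq_bigr => k _; rewrite ffunE expr2.
Qed.

End PathPartials.

Theorem propositionG1 (V : finType) (E : rel V) (R : realType) :
  acyclic E ->
  forall (theta : {ffun param E -> R}) (i : param E),
    Gmat theta i i = partial (@Psi V E R) i (hadamard theta theta).
Proof.
move=> _ theta i; rewrite partial_Psi /Gmat.
by congr sum_paths; apply: boolp.funext => s; rewrite partial_Phi dPhi_hadamard expr2.
Qed.
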